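(* The undirected graph $G^*_u$ defined in the context is perfect.
   Context: Consider the three-receiver unicast index coding problem with 12 messages indexed by $[12]$, where receiver $u_i$ demands the messages indexed by $W_i$ and knows those indexed by $K_i$: $W_1=\{1,2,3,4\}$, $W_2=\{5,6,7,8\}$, $W_3=\{9,10,11,12\}$, $K_1=\{5,6,9,10\}$, $K_2=\{1,2,9,11\}$, $K_3=\{1,3,5,7\}$. $G^*$ is the directed graph on vertex set $[12]$ with a directed edge $(a,b)$ iff $b\in K_i$, where $i$ is the unique index with $a\in W_i$. $G^*_u$ is the undirected graph on $[12]$ in which $\{a,b\}$ is an edge iff both $(a,b)$ and $(b,a)$ are edges of $G^*$. An undirected graph is perfect if for every induced subgraph $H$, the independence number of $H$ equals its clique cover number. *)

From mathcomp Require Import all_boot.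
Set Implicit Arguments. Unset Strict Implicit. Unset Printing Implicit Defensive.

Section GraphNotions.
Variables (T : finType) (e : rel T).

Definition independent (I : {set T}) : bool :=
  [forall x in I, forall y in I, (x != y) ==> ~~ e x y].

Definition clique (C : {set T}) : bool :=
  [forall x in C, forall y in C, (x != y) ==> e x y].

Definition indep_num (S : {set T}) : nat :=
  \max_(I : {set T} | (I \subset S) && independent I) #|I|.

(* Clique cover number of G[S]: least number of cliques partitioning S.
   (A partition into singletons always exists, so the default #|T|.+1 is never
   attained.) *)
Definition clique_cover_num (S : {set T}) : nat :=
  \big[minn/#|T|.+1]_(P : {set {set T}} |
        partition P S && [forall C in P, clique C]) #|P|.

Definition perfect : Prop :=
  forall S : {set T}, indep_num S = clique_cover_num S.
End GraphNotions.

(* Messages are [12] = {1,...,12}; vertex v : 'I_12 stands for message v.+1. *)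
Definition W (i : nat) : seq nat :=
  match i with
  | 1 => [:: 1; 2; 3; 4]
  | 2 => [:: 5; 6; 7; 8]
  | 3 => [:: 9; 10; 11; 12]
  | _ => [::]
  end.

Definition K (i : nat) : seq nat :=
  match i with
  | 1 => [:: 5; 6; 9; 10]
  | 2 => [:: 1; 2; 9; 11]
  | 3 => [:: 1; 3; 5; 7]
  | _ => [::]
  end.

Definition msg (v : 'I_12) : nat := v.+1.

Definition Gstar : rel 'I_12 :=
  fun a b => [exists i : 'I_3, (msg a \in W i.+1) && (msg b \in K i.+1)].

Definition Gstar_u : rel 'I_12 := fun a b => Gstar a b && Gstar b a.

From mathcomp Require Import all_boot all_order.
Set Implicit Arguments. Unset Strict Implicit. Unset Printing Implicit Defensive.
Import Order.TTheory.

(* An independent set meets every block of a clique partition at most once, so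
   alpha(S) <= theta(S) for every vertex set S.  Conversely, a map r : S -> S
   whose image is independent and whose fibres are cliques partitions S into
   #|r @: S| <= alpha(S) cliques.  For each of the 2^12 vertex sets such a map
   is found by a search and verified by computation. *)

Section CliqueCovers.
Variables (T : finType) (e : rel T).

Lemma independentP (I : {set T}) :
  reflect {in I &, forall x y, x != y -> ~~ e x y} (independent e I).
Proof.
apply: (iffP forall_inP) => [indI x y Ix Iy | indI x Ix].
  exact/implyP/(forall_inP (indI x Ix)).
by apply/forall_inP => y Iy; apply/implyP; apply: indI.
Qed.

Lemma cliqueP (C : {set T}) :
  reflect {in C &, forall x y, x != y -> e x y} (clique e C).
Proof.
apply: (iffP forall_inP) => [cliqueC x y Cx Cy | cliqueC x Cx].
  exact/implyP/(forall_inP (cliqueC x Cx)).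
by apply/forall_inP => y Cy; apply/implyP; apply: cliqueC.
Qed.

Lemma card_le_indep_num (S I : {set T}) :
  I \subset S -> independent e I -> #|I| <= indep_num e S.
Proof. by move=> sIS indI; apply: leq_bigmax_cond; rewrite sIS. Qed.

Lemma clique_cover_num_le_card (S : {set T}) (P : {set {set T}}) :
  partition P S -> [forall C in P, clique e C] -> clique_cover_num e S <= #|P|.
Proof.
move=> partP cliqueP; rewrite /clique_cover_num -minEnat.
by apply: (bigmin_le_cond _ (fun Q : {set {set T}} => #|Q|)); rewrite partP cliqueP.
Qed.

Lemma indep_num_le_clique_cover_num (S : {set T}) :
  indep_num e S <= clique_cover_num e S.
Proof.
apply/bigmax_leqP => I /andP[sIS /independentP indI].
apply: (big_ind (fun m => #|I| <= m)) => [|m n|P /andP[partP /forall_inP cliqueB]].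
- exact/leqW/max_card.
- by rewrite leq_min => -> ->.
have [/eqP coverP _ _] := and3P partP.
have inP x : x \in I -> x \in cover P by rewrite coverP => /(subsetP sIS).
have pblock_inj : {in I &, injective (pblock P)}.
  move=> x y Ix Iy eq_xy; apply/eqP; apply: contraT => neq_xy.
  have /cliqueP cliqueBx := cliqueB _ (pblock_mem (inP x Ix)).
  have := cliqueBx x y; rewrite {2}eq_xy !mem_pblock !inP //.
  move=> /(_ isT isT neq_xy) exy.
  by have := indI x y Ix Iy neq_xy; rewrite exy.
rewrite -(card_in_imset pblock_inj); apply/subset_leq_card/subsetP.
by move=> _ /imsetP[x Ix ->]; exact/pblock_mem/inP.
Qed.

Lemma clique_cover_num_le_fibers (rT : finType) (S : {set T}) (f : T -> rT) :
  {in S &, forall x y, x != y -> f x = f y -> e x y} ->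
  clique_cover_num e S <= #|f @: S|.
Proof.
move=> fiber_clique.
apply: leq_trans (clique_cover_num_le_card (preim_partitionP f S) _) _.
  apply/forall_inP => _ /imsetP[x Sx ->]; apply/cliqueP => y z.
  rewrite !inE => /andP[Sy /eqP fxy] /andP[Sz /eqP fxz] neq_yz.
  by apply: fiber_clique; rewrite // -fxy -fxz.
rewrite /preim_partition /equivalence_partition.
rewrite (imset_comp (fun a => [set y in S | a == f y]) f); exact: leq_imset_card.
Qed.

Lemma indep_num_eq_clique_cover_num (S : {set T}) (r : T -> T) :
  {in S, forall x, r x \in S} ->
  {in S &, forall x y, r x != r y -> ~~ e (r x) (r y)} ->
  {in S &, forall x y, x != y -> r x = r y -> e x y} ->
  indep_num e S = clique_cover_num e S.
Proof.
move=> rS indep_r fiber_clique; apply/eqP; rewrite eqn_leq indep_num_le_clique_cover_num.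
apply: leq_trans (clique_cover_num_le_fibers fiber_clique) (card_le_indep_num _ _).
  by apply/subsetP => _ /imsetP[x Sx ->]; apply: rS.
by apply/independentP => _ _ /imsetP[x Sx ->] /imsetP[y Sy ->]; apply: indep_r.
Qed.
End CliqueCovers.

Section RelationCongruence.
Variables (T : finType) (e e' : rel T).
Hypothesis ee' : e =2 e'.

Lemma eq_indep_num (S : {set T}) : indep_num e S = indep_num e' S.
Proof.
apply: eq_bigl => I; congr (_ && _).
by apply/independentP/independentP => indI x y Ix Iy;
  [rewrite -ee' | rewrite ee']; apply: indI.
Qed.

Lemma eq_clique_cover_num (S : {set T}) : clique_cover_num e S = clique_cover_num e' S.
Proof.
apply: eq_bigl => P; congr (_ && _); apply: eq_forallb => C; congr (_ ==> _).
by apply/cliqueP/cliqueP => cliqueC x y Cx Cy;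
  [rewrite -ee' | rewrite ee']; apply: cliqueC.
Qed.

Lemma eq_perfect : perfect e <-> perfect e'.
Proof. by split=> perf S; move: (perf S); rewrite eq_indep_num eq_clique_cover_num. Qed.
End RelationCongruence.

Section Certificates.
Variables (T : finType) (e : rel T).

Definition clique_representatives (s : seq T) (r : T -> T) : bool :=
  [&& all (fun x => r x \in s) s,
      all (fun x => all (fun y => (r x != r y) ==> ~~ e (r x) (r y)) s) s
    & all (fun x => all (fun y => (x != y) && (r x == r y) ==> e x y) s) s].

Lemma clique_representatives_indep_cover (s : seq T) (r : T -> T) :
  clique_representatives s r ->
  indep_num e [set x in s] = clique_cover_num e [set x in s].
Proof.
case/and3P => /allP rs /allP indep_r /allP fiber_clique.
apply: (indep_num_eq_clique_cover_num (r := r)) => [x | x y | x y].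
- by rewrite !inE => /rs.
- by rewrite !inE => sx sy; apply/implyP/(allP (indep_r x sx)).
rewrite !inE => sx sy neq_xy eq_r.
by have /allP/(_ y sy) := fiber_clique x sx; rewrite neq_xy eq_r eqxx.
Qed.

Fixpoint subseqs (s : seq T) : seq (seq T) :=
  if s is x :: s' then let ss := subseqs s' in [seq x :: t | t <- ss] ++ ss
  else [:: [::]].

Lemma mem_subseqs_filter (p : pred T) (s : seq T) : filter p s \in subseqs s.
Proof.
elim: s => [|x s IHs] /=; first by rewrite mem_seq1.
by case: (p x); rewrite mem_cat ?IHs ?orbT // map_f.
Qed.

Lemma perfect_of_clique_representatives (vs : seq T) (rep : seq T -> T -> T) :
  (forall x, x \in vs) ->
  all (fun s => clique_representatives s (rep s)) (subseqs vs) -> perfect e.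
Proof.
move=> vs_full /allP certified S.
have -> : S = [set x in [seq x <- vs | x \in S]].
  by apply/setP => x; rewrite inE mem_filter vs_full andbT.
exact/clique_representatives_indep_cover/certified/mem_subseqs_filter.
Qed.
End Certificates.

(* An unverified search: [clique_representatives] rechecks whatever it returns. *)
Section Search.
Variables (T : eqType) (e : rel T).

Fixpoint max_indep_ext (s I : seq T) : seq T :=
  if s is x :: s' then
    let skip := max_indep_ext s' I in
    if all (fun y => ~~ e x y) I then
      let take := max_indep_ext s' (x :: I) in
      if size skip < size take then take else skip
    else skip
  else I.

Fixpoint assign_representatives (I s : seq T) (acc : seq (T * T)) :
    option (seq (T * T)) :=
  if s is x :: s' then
    let fix first ys :=
      if ys is y :: ys' then
        if assign_representatives I s' ((x, y) :: acc) is Some a then Some a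
        else first ys'
      else None in
    first [seq y <- I | ((x == y) || e x y) &&
                        all (fun p => (p.2 != y) || e x p.1) acc]
  else Some acc.

Definition representatives (s : seq T) : T -> T :=
  let a := odflt [::] (assign_representatives (max_indep_ext s [::]) s [::]) in
  fun x => head x [seq p.2 | p <- a & p.1 == x].
End Search.

Lemma exists_ordE n (P : pred nat) : [exists i : 'I_n, P i] = has P (iota 0 n).
Proof.
apply/existsP/hasP => [[i Pi] | [k]].
  by exists (val i); rewrite ?mem_iota ?ltn_ord.
by rewrite mem_iota => /andP[_ lt_kn] Pk; exists (Ordinal lt_kn).
Qed.

Definition Gstar_arc (a b : 'I_12) : bool :=
  has (fun i => (msg a \in W i.+1) && (msg b \in K i.+1)) (iota 0 3).

Definition Gstar_edge (a b : 'I_12) : bool := Gstar_arc a b && Gstar_arc b a.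

Lemma Gstar_uE : Gstar_u =2 Gstar_edge.
Proof. by move=> a b; rewrite /Gstar_edge /Gstar_arc -!exists_ordE. Qed.

(* [enum 'I_12] is stuck under [vm_compute] (it goes through the opaque [idP]). *)
Definition vertices : seq 'I_12 :=
  [:: @Ordinal 12 0 isT; @Ordinal 12 1 isT; @Ordinal 12 2 isT; @Ordinal 12 3 isT;
      @Ordinal 12 4 isT; @Ordinal 12 5 isT; @Ordinal 12 6 isT; @Ordinal 12 7 isT;
      @Ordinal 12 8 isT; @Ordinal 12 9 isT; @Ordinal 12 10 isT; @Ordinal 12 11 isT].

Lemma mem_vertices (x : 'I_12) : x \in vertices.
Proof.
by rewrite -(mem_map val_inj) (_ : map val vertices = iota 0 12) // mem_iota ltn_ord.
Qed.

Lemma Gstar_edge_certified :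
  all (fun s => clique_representatives Gstar_edge s (representatives Gstar_edge s))
      (subseqs vertices).
Proof. vm_cast_no_check (erefl true). Qed.

Theorem theorem3 : perfect Gstar_u.
Proof.
apply/(eq_perfect Gstar_uE).
exact: perfect_of_clique_representatives mem_vertices Gstar_edge_certified.
Qed.
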